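(* Let $\mathfrak g$ be any complex simple Lie algebra with a choice of positive roots $\Sigma^+$. Then, as a rational function, $$\sum_{\substack{\beta,\gamma\in\Sigma^+\\ \beta\neq\gamma}}\frac{\langle\beta,\gamma\rangle}{\beta\,\gamma}=0.$$
   Context: Roots are regarded as linear functions (on the real Cartan subspace, equivalently on its dual via the inner product), so $\frac{\langle\beta,\gamma\rangle}{\beta\gamma}$ is a rational function whose numerator is the constant $\langle\beta,\gamma\rangle$, the inner product on roots induced by the Killing form. *)

From HB Require Import structures.
From mathcomp Require Import all_boot all_order all_algebra.
From mathcomp Require Import reals.
Set Implicit Arguments. Unset Strict Implicit. Unset Printing Implicit Defensive.
Import Order.TTheory GRing.Theory Num.Theory.
Local Open Scope ring_scope.

Definition dot (R : realType) (n : nat) (u v : 'rV[R]_n) : R := (u *m v^T) 0 0.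

Definition root_system (R : realType) (n : nat) (Phi : seq 'rV[R]_n) : Prop :=
  [/\ uniq Phi,
      (0 : 'rV[R]_n) \notin Phi,
      (<<Phi>>%VS = fullv),
      (forall (c : R) al, al \in Phi -> c *: al \in Phi -> c = 1 \/ c = -1) &
      (forall al be, al \in Phi -> be \in Phi ->
         be - (2 * dot be al / dot al al) *: al \in Phi /\
         (2 * dot be al / dot al al) \is a Num.int)].

Definition irreducible_rs (R : realType) (n : nat) (Phi : seq 'rV[R]_n) : Prop :=
  forall P : pred 'rV[R]_n,
    (forall al be, al \in Phi -> be \in Phi -> P al -> ~~ P be -> dot al be = 0) ->
    (forall al, al \in Phi -> P al) \/ (forall al, al \in Phi -> ~~ P al).

Definition positive_roots (R : realType) (n : nat) (Phi : seq 'rV[R]_n)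
  (f : 'rV[R]_n) : seq 'rV[R]_n := [seq al <- Phi | 0 < dot f al].

Definition regular (R : realType) (n : nat) (Phi : seq 'rV[R]_n) (f : 'rV[R]_n) :=
  forall al, al \in Phi -> dot f al != 0.

(* Multiplying the sum by the product of the <k, x>, k positive, gives the
   polynomial N(x) = sum_(b <> g) <b, g> prod_(k <> b, g) <k, x> of degree
   |Sigma+| - 2.  On the hyperplane <b, x> = 0 only the terms involving b
   survive, and they add up to twice prod_(k <> b) <k, x> times
   sum_(g <> b) <b, g> / <g, x>.  This last sum vanishes: g |-> +-s_b g,
   with the sign making it positive, is an involution of Sigma+ \ {b} that
   negates each summand.  So N vanishes on every root hyperplane; on a
   generic line it is a polynomial of degree < |Sigma+| with |Sigma+|
   distinct zeros, hence N = 0. *)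

From HB Require Import structures.
From mathcomp Require Import all_boot all_order all_algebra.
From mathcomp Require Import reals.
From mathcomp Require Import ring zify.
Import Order.TTheory GRing.Theory Num.Theory.
Local Open Scope ring_scope.

Set Implicit Arguments.
Unset Strict Implicit.
Unset Printing Implicit Defensive.

Lemma exists_pos_notin (R : realDomainType) (s : seq R) :
  exists2 c : R, 0 < c & c \notin s.
Proof.
exists (1 + \sum_(a <- s) `|a|); first by rewrite ltr_pwDl ?sumr_ge0.
have le_sum a : a \in s -> a <= \sum_(a <- s) `|a|.
  by move=> /(big_rem _) ->; rewrite (le_trans (ler_norm a)) // lerDl sumr_ge0.
apply/negP => /le_sum.
by rewrite gerDr ler10.
Qed.

Section Dot.
Variables (R : realType) (n : nat).
Implicit Types u v w : 'rV[R]_n.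

Lemma dotE u v : dot u v = \sum_j u 0 j * v 0 j.
Proof. by rewrite /dot !mxE; apply: eq_bigr => j _; rewrite mxE. Qed.

Lemma dotC u v : dot u v = dot v u.
Proof. by rewrite !dotE; apply: eq_bigr => j _; rewrite mulrC. Qed.

Lemma dotDr u v w : dot u (v + w) = dot u v + dot u w.
Proof. by rewrite !dotE -big_split; apply: eq_bigr => j _; rewrite mxE mulrDr. Qed.

Lemma dotZr u (c : R) v : dot u (c *: v) = c * dot u v.
Proof. by rewrite !dotE mulr_sumr; apply: eq_bigr => j _; rewrite mxE mulrCA. Qed.

Lemma dotNr u v : dot u (- v) = - dot u v.
Proof. by rewrite -scaleN1r dotZr mulN1r. Qed.

Lemma dotBr u v w : dot u (v - w) = dot u v - dot u w.
Proof. by rewrite dotDr dotNr. Qed.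

Lemma dotZl u (c : R) v : dot (c *: v) u = c * dot v u.
Proof. by rewrite dotC dotZr dotC. Qed.

Lemma dotNl u v : dot (- v) u = - dot v u.
Proof. by rewrite dotC dotNr dotC. Qed.

Lemma dotBl u v w : dot (v - w) u = dot v u - dot w u.
Proof. by rewrite dotC dotBr !(dotC u). Qed.

Lemma dot_self_eq0 v : (dot v v == 0) = (v == 0).
Proof.
apply/eqP/eqP => [|->]; last by rewrite dotE big1 // => j _; rewrite mxE mul0r.
rewrite dotE => /psumr_eq0P vv0; apply/rowP => j; rewrite mxE.
have /(_ j isT)/eqP := vv0 (fun i _ => sqr_ge0 (v 0 i)).
by rewrite mulf_eq0 orbb => /eqP.
Qed.

Lemma exists_not_orthogonal (vs : seq 'rV[R]_n) :
  exists y, forall v, v \in vs -> v != 0 -> dot v y != 0.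
Proof.
elim: vs => [|v vs [y yP]]; first by exists 0.
have [->|v_neq0] := eqVneq v 0.
  by exists y => w; rewrite inE => /predU1P [->|/yP //]; rewrite eqxx.
have [vy0|vy_neq0] := eqVneq (dot v y) 0; last first.
  by exists y => w; rewrite inE => /predU1P [->|/yP].
have [c c_gt0 cP] := exists_pos_notin [seq - dot w y / dot w v | w <- vs].
exists (y + c *: v) => w; rewrite inE dotDr dotZr => /predU1P [-> _|w_vs w_neq0].
  by rewrite vy0 add0r mulf_neq0 ?(gt_eqF c_gt0) ?dot_self_eq0.
have [wv0|wv_neq0] := eqVneq (dot w v) 0; first by rewrite wv0 mulr0 addr0 yP.
apply: contra cP => /eqP wc0; apply/mapP; exists w => //.
by rewrite -[dot w y]subr0 -wc0; field.
Qed.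

End Dot.

Lemma big_involution_oppr_eq0 (R : numDomainType) (T : eqType) (s : seq T)
    (sg : T -> T) (h : T -> R) :
  uniq s -> {in s, forall g, sg g \in s} -> {in s, involutive sg} ->
  {in s, forall g, h (sg g) = - h g} -> \sum_(g <- s) h g = 0.
Proof.
move=> s_uniq sg_s sgK h_sg.
have sg_perm : perm_eq (map sg s) s.
  apply: uniq_perm => //; first by rewrite (map_inj_in_uniq (can_in_inj sgK)).
  move=> g; apply/mapP/idP => [[g' g's ->]|g_s]; first exact: sg_s.
  by exists (sg g); rewrite ?sgK ?sg_s.
have : \sum_(g <- s) h g = - \sum_(g <- s) h g.
  by rewrite -[LHS](perm_big _ sg_perm) big_map -sumrN; apply: eq_big_seq.
by move/eqP; rewrite -subr_eq0 opprK -mulr2n mulrn_eq0 => /eqP.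
Qed.

Section RootSystem.
Variables (R : realType) (n : nat) (Phi : seq 'rV[R]_n).
Hypothesis Phi_rs : root_system Phi.
Implicit Types (u v w : 'rV[R]_n) (b g : 'rV[R]_n).

Definition reflection b v := v - (2 * dot v b / dot b b) *: b.

Lemma root_neq0 b : b \in Phi -> b != 0.
Proof. by case: Phi_rs => _ Phi_neq0 _ _ _; apply: contraTneq => ->. Qed.

Lemma dot_root_neq0 b : b \in Phi -> dot b b != 0.
Proof. by rewrite dot_self_eq0; apply: root_neq0. Qed.

Lemma reflection_root b g : b \in Phi -> g \in Phi -> reflection b g \in Phi.
Proof. by case: Phi_rs => _ _ _ _ refl_mem b_Phi g_Phi; case: (refl_mem b g). Qed.

Lemma reflection_self b : b \in Phi -> reflection b b = - b.
Proof.
move=> b_Phi; rewrite /reflection mulfK ?dot_root_neq0 //.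
by rewrite scaler_nat mulr2n opprD addNKr.
Qed.

Lemma oppr_root b : b \in Phi -> - b \in Phi.
Proof. by move=> b_Phi; rewrite -reflection_self ?reflection_root. Qed.

Lemma dot_reflection_root b v : b \in Phi -> dot (reflection b v) b = - dot v b.
Proof. by move=> /dot_root_neq0 bb0; rewrite dotBl dotZl; field. Qed.

Lemma dot_reflection_orth b u v :
  dot b u = 0 -> dot (reflection b v) u = dot v u.
Proof. by move=> bu0; rewrite dotBl dotZl bu0 mulr0 subr0. Qed.

Lemma reflectionK b : b \in Phi -> involutive (reflection b).
Proof.
move=> b_Phi v; rewrite {1}/reflection dot_reflection_root // /reflection.
by rewrite mulrN mulNr scaleNr opprK subrK.
Qed.

Lemma reflectionN b v : reflection b (- v) = - reflection b v.
Proof. by rewrite /reflection dotNl mulrN mulNr scaleNr opprD. Qed.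

Variable f : 'rV[R]_n.
Hypothesis f_reg : regular Phi f.
Local Notation L := (positive_roots Phi f).

Lemma mem_positive_roots g : (g \in L) = (g \in Phi) && (0 < dot f g).
Proof. by rewrite mem_filter andbC. Qed.

Lemma uniq_positive_roots : uniq L.
Proof. by case: Phi_rs => Phi_uniq *; rewrite filter_uniq. Qed.

Lemma positive_roots_proportional b g (c : R) :
  b \in L -> g \in L -> g = c *: b -> g = b.
Proof.
rewrite !mem_positive_roots => /andP [b_Phi fb_gt0] /andP [g_Phi fg_gt0] gE.
case: Phi_rs => _ _ _ reduced _; rewrite gE in g_Phi fg_gt0 *.
have [->|cN1] := reduced c b b_Phi g_Phi; first by rewrite scale1r.
by move: fg_gt0; rewrite cN1 scaleN1r dotNr oppr_gt0 ltNge ltW.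
Qed.

Definition to_positive v := if 0 < dot f v then v else - v.

Lemma to_positive_root v : v \in Phi -> to_positive v \in L.
Proof.
move=> v_Phi; rewrite /to_positive mem_positive_roots.
case: ifP => [->|]; first by rewrite v_Phi.
rewrite oppr_root // dotNr oppr_gt0.
by move/negbT; rewrite -leNgt le_eqVlt (negbTE (f_reg v_Phi)).
Qed.

Lemma to_positive_id v : v \in L -> to_positive v = v.
Proof. by rewrite mem_positive_roots /to_positive => /andP [_ ->]. Qed.

Lemma to_positiveN v : v \in Phi -> to_positive (- v) = to_positive v.
Proof.
move=> v_Phi; rewrite /to_positive dotNr oppr_gt0 opprK.
have := f_reg v_Phi; rewrite neq_lt.
by case: ltgtP.
Qed.

Definition positive_reflection b g := to_positive (reflection b g).

Lemma positive_reflection_mem b g : b \in L -> g \in L -> g != b ->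
  positive_reflection b g \in [seq g <- L | g != b].
Proof.
rewrite !mem_positive_roots => /andP [b_Phi fb_gt0] /andP [g_Phi fg_gt0] g_neq_b.
rewrite mem_filter to_positive_root ?reflection_root // andbT.
apply: contra g_neq_b; rewrite /positive_reflection /to_positive.
case: ifP => _ /eqP gE.
  by move: fg_gt0; rewrite -(reflectionK b_Phi g) gE reflection_self // dotNr
    oppr_gt0 ltNge ltW.
by rewrite -(reflectionK b_Phi g) -[reflection b g]opprK gE reflectionN
  reflection_self ?opprK.
Qed.

Lemma to_positive_reflection b v : b \in Phi -> v \in Phi ->
  to_positive (reflection b (to_positive v)) = to_positive (reflection b v).
Proof.
move=> b_Phi v_Phi; rewrite {2}/to_positive; case: ifP => // _.
by rewrite reflectionN to_positiveN ?reflection_root.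
Qed.

Lemma positive_reflectionK b g :
  b \in Phi -> g \in L -> positive_reflection b (positive_reflection b g) = g.
Proof.
move=> b_Phi g_L; have := g_L; rewrite mem_positive_roots => /andP [g_Phi _].
rewrite /positive_reflection to_positive_reflection ?reflection_root //.
by rewrite reflectionK ?to_positive_id.
Qed.

Lemma sum_positive_roots_orth b z : b \in L -> dot b z = 0 ->
  \sum_(g <- L | g != b) dot b g / dot g z = 0.
Proof.
move=> b_L bz0; have b_Phi : b \in Phi by move: b_L; rewrite mem_positive_roots => /andP [].
rewrite -big_filter; apply: (big_involution_oppr_eq0 (sg := positive_reflection b)).
- by rewrite filter_uniq ?uniq_positive_roots.
- by move=> g; rewrite mem_filter => /andP [g_neq_b g_L]; apply: positive_reflection_mem.
- by move=> g; rewrite mem_filter => /andP [_ g_L]; apply: positive_reflectionK.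
move=> g _; rewrite /positive_reflection /to_positive.
have b_rg : dot b (reflection b g) = - dot b g.
  by rewrite dotC dot_reflection_root // dotC.
have rg_z : dot (reflection b g) z = dot g z by apply: dot_reflection_orth.
by case: ifP => _; rewrite ?dotNr ?dotNl b_rg rg_z ?invrN ?mulrNN mulNr.
Qed.

End RootSystem.

Lemma bigD1_seq_cond (R : Type) (idx : R) (op : Monoid.com_law idx) (I : eqType)
    (r : seq I) (P : pred I) (F : I -> R) j :
  j \in r -> uniq r -> P j ->
  \big[op/idx]_(i <- r | P i) F i =
    op (F j) (\big[op/idx]_(i <- r | P i && (i != j)) F i).
Proof.
move=> j_r r_uniq Pj; rewrite -big_filter (bigD1_seq j) ?mem_filter ?Pj //.
  by rewrite big_filter_cond.
by rewrite filter_uniq.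
Qed.

Arguments bigD1_seq_cond {R idx op I r P F} j.

Lemma size_prod_seq_linear (R : nzRingType) (T : Type) (s : seq T) (Q : pred T)
    (p : T -> {poly R}) :
  (forall k, (size (p k) <= 2)%N) ->
  (size (\prod_(k <- s | Q k) p k)%R <= (count Q s).+1)%N.
Proof.
move=> p_lin; elim: s => [|a s IH]; first by rewrite big_nil size_poly1.
rewrite big_cons /=; case: ifP => Qa /=; last by rewrite add0n.
apply: leq_trans (size_polyMleq _ _) _; have := p_lin a; move: IH.
by rewrite add1n; case: (size (p a)) => [|[|[|m]]] //=; lia.
Qed.

Section PairNumerator.
Variables (T : eqType) (L : seq T).

Definition pair_numer (R : comNzRingType) (d : T -> T -> R) (e : T -> R) : R :=
  \sum_(b <- L) \sum_(g <- L | g != b)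
    d b g * \prod_(k <- L | (k != b) && (k != g)) e k.

Lemma rmorph_pair_numer (R S : comNzRingType) (phi : {rmorphism R -> S}) d e :
  phi (pair_numer d e) = pair_numer (fun b g => phi (d b g)) (phi \o e).
Proof.
rewrite rmorph_sum; apply: eq_bigr => b _; rewrite rmorph_sum.
by apply: eq_bigr => g _; rewrite rmorphM rmorph_prod.
Qed.

Lemma size_pair_numer (R : comNzRingType) (d : T -> T -> {poly R})
    (e : T -> {poly R}) :
  (forall b g, (size (d b g) <= 1)%N) -> (forall k, (size (e k) <= 2)%N) ->
  (size (pair_numer d e) <= size L)%N.
Proof.
move=> d_const e_lin.
have count_lt b (Q : pred T) : b \in L -> ~~ Q b -> (count Q L < size L)%N.
  move=> b_L Qb; rewrite -(count_predC Q L) -addn1 leq_add2l -has_count.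
  by apply/hasP; exists b.
have size_add (p q : {poly R}) : (size p <= size L)%N -> (size q <= size L)%N ->
    (size (p + q)%R <= size L)%N.
  by move=> p_le q_le; apply: leq_trans (size_polyD _ _) _; rewrite geq_max p_le q_le.
rewrite /pair_numer big_seq.
apply: (big_ind (fun p : {poly R} => size p <= size L)%N).
- by rewrite size_poly0.
- exact: size_add.
move=> b b_L; apply: (big_ind (fun p : {poly R} => size p <= size L)%N).
- by rewrite size_poly0.
- exact: size_add.
move=> g _; apply: leq_trans (size_polyMleq _ _) _.
have := count_lt b (fun k => (k != b) && (k != g)) b_L; rewrite eqxx => /(_ isT).
have := size_prod_seq_linear L (fun k => (k != b) && (k != g)) e_lin; have := d_const b g.
set c := count _ _; set sp := size _; set sd := size _.
move=> sd_le sp_le c_lt; rewrite -subn1; lia.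
Qed.

Lemma eq_pair_numer (R : comNzRingType) (d d' : T -> T -> R) (e e' : T -> R) :
  (forall b g, d b g = d' b g) -> (forall k, e k = e' k) ->
  pair_numer d e = pair_numer d' e'.
Proof.
move=> dE eE; apply: eq_bigr => b _; apply: eq_bigr => g _.
by rewrite dE; congr (_ * _); apply: eq_bigr => k _.
Qed.

Hypothesis L_uniq : uniq L.
Variables (F : fieldType) (d : T -> T -> F) (e : T -> F).

Lemma pair_numerE : {in L, forall k, e k != 0} ->
  pair_numer d e =
    \prod_(k <- L) e k * \sum_(b <- L) \sum_(g <- L | g != b) d b g / (e b * e g).
Proof.
move=> e_neq0; rewrite big_distrr; apply: eq_big_seq => b b_L /=.
rewrite big_distrr /= big_seq_cond [RHS]big_seq_cond.
apply: eq_bigr => g /andP [g_L g_neq_b].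
rewrite [in RHS](bigD1_seq b) //= [in RHS](bigD1_seq_cond g) //=.
by field; rewrite !e_neq0.
Qed.

Lemma pair_numer_root b0 : (forall b g, d b g = d g b) ->
  b0 \in L -> e b0 = 0 -> {in L, forall g, g != b0 -> e g != 0} ->
  pair_numer d e =
    (\prod_(k <- L | k != b0) e k * \sum_(g <- L | g != b0) d b0 g / e g) *+ 2.
Proof.
move=> dC b0_L eb0 e_neq0; rewrite /pair_numer (bigD1_seq b0) //= mulr2n.
have -> : \prod_(k <- L | k != b0) e k * \sum_(g <- L | g != b0) d b0 g / e g =
    \sum_(g <- L | g != b0) d b0 g * \prod_(k <- L | (k != b0) && (k != g)) e k.
  rewrite big_distrr /= big_seq_cond [RHS]big_seq_cond.
  apply: eq_bigr => g /andP [g_L g_neq_b0]; rewrite [in LHS](bigD1_seq_cond g) //=.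
  by field; rewrite e_neq0.
congr (_ + _); rewrite big_seq_cond [RHS]big_seq_cond.
apply: eq_bigr => b /andP [b_L b_neq_b0].
rewrite (bigD1_seq_cond b0) //=; last by rewrite eq_sym.
rewrite [X in _ + X]big1_seq ?addr0 => [|g /andP [/andP [g_neq_b g_neq_b0] g_L]].
  by rewrite dC; congr (_ * _); apply: eq_bigl => k; rewrite andbC.
by rewrite (bigD1_seq_cond b0) //= ?eb0 ?mul0r ?mulr0 // eq_sym b_neq_b0 eq_sym.
Qed.

End PairNumerator.

Section GenericLine.
Variables (R : realType) (n : nat) (Phi : seq 'rV[R]_n) (f x : 'rV[R]_n).
Hypotheses (Phi_rs : root_system Phi) (f_reg : regular Phi f).
Local Notation L := (positive_roots Phi f).
Hypothesis x_nonorth : {in L, forall b, dot b x != 0}.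

Lemma exists_generic_direction : exists y : 'rV[R]_n,
  {in L, forall b, dot b y != 0} /\
  {in L &, forall b g, b != g -> dot b x * dot g y != dot g x * dot b y}.
Proof.
have L_Phi b : b \in L -> b \in Phi by rewrite mem_positive_roots => /andP [].
pose w b g := dot b x *: g - dot g x *: b.
have [y y_gen] := exists_not_orthogonal (L ++ [seq w b g | b <- L, g <- L]).
exists y; split=> [b b_L|b g b_L g_L b_neq_g].
  by apply: y_gen; rewrite ?mem_cat ?b_L // (root_neq0 Phi_rs) ?L_Phi.
rewrite -subr_eq0 -!dotZl -dotBl -/(w b g).
apply: y_gen; first by rewrite mem_cat; apply/orP; right; apply: allpairs_f.
apply: contra b_neq_g; rewrite /w subr_eq0 => /eqP wE.
suff : g = (dot g x / dot b x) *: b by move/(positive_roots_proportional Phi_rs b_L g_L) ->.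
by rewrite mulrC -scalerA -wE scalerA mulVf ?x_nonorth ?scale1r.
Qed.

Variable y : 'rV[R]_n.
Hypothesis y_nonorth : {in L, forall b, dot b y != 0}.
(* Distinct positive roots then vanish at distinct points of the line x + t y. *)
Hypothesis xy_indep :
  {in L &, forall b g, b != g -> dot b x * dot g y != dot g x * dot b y}.

Definition line_form b : {poly R} := (dot b x)%:P + (dot b y)%:P * 'X.

Lemma horner_line_form b t : (line_form b).[t] = dot b (x + t *: y).
Proof. by rewrite hornerD hornerMX !hornerC dotDr dotZr mulrC. Qed.

Lemma size_line_form b : (size (line_form b) <= 2)%N.
Proof.
apply: leq_trans (size_polyD _ _) _; rewrite geq_max mul_polyC.
by rewrite (leq_trans (size_polyC_leq1 _)) // (leq_trans (size_scale_leq _ _)) ?size_polyX.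
Qed.

Definition line_root b := - dot b x / dot b y.

Lemma dot_line_root b : b \in L -> dot b (x + line_root b *: y) = 0.
Proof. by move=> b_L; rewrite dotDr dotZr /line_root divfK ?y_nonorth ?subrr. Qed.

Lemma dot_line_root_neq0 b g : b \in L -> g \in L -> g != b ->
  dot g (x + line_root b *: y) != 0.
Proof.
move=> b_L g_L g_neq_b; rewrite dotDr dotZr /line_root.
have -> : dot g x + - dot b x / dot b y * dot g y =
    (dot g x * dot b y - dot b x * dot g y) / dot b y.
  by field; rewrite y_nonorth.
by rewrite mulf_neq0 ?invr_eq0 ?y_nonorth // subr_eq0 xy_indep.
Qed.

Lemma line_root_inj : {in L &, injective line_root}.
Proof.
move=> b g b_L g_L rE; apply/eqP; apply: contraT => b_neq_g.
have := dot_line_root_neq0 b_L g_L; rewrite eq_sym b_neq_g rE dot_line_root //.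
by rewrite eqxx => /(_ isT).
Qed.

Definition line_numer := pair_numer L (fun b g => (dot b g)%:P) line_form.

Lemma horner_line_numer t :
  line_numer.[t] = pair_numer L (@dot R n) (fun k => dot k (x + t *: y)).
Proof.
rewrite -horner_evalE rmorph_pair_numer; apply: eq_pair_numer => [b g|k] /=.
  by rewrite horner_evalE hornerC.
by rewrite horner_evalE horner_line_form.
Qed.

Lemma root_line_numer b : b \in L -> root line_numer (line_root b).
Proof.
move=> b_L; rewrite /root horner_line_numer.
rewrite (pair_numer_root _ _ b_L (dot_line_root b_L)).
- by rewrite (sum_positive_roots_orth Phi_rs f_reg b_L (dot_line_root b_L)) mulr0 mul0rn.
- exact: uniq_positive_roots.
- exact: dotC.
by move=> g g_L; apply: dot_line_root_neq0.
Qed.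

Lemma line_numer_eq0 : line_numer = 0.
Proof.
apply/eqP; apply: contraT => numer_neq0.
have := max_poly_roots numer_neq0 (rs := map line_root L).
rewrite size_map map_inj_in_uniq ?(uniq_positive_roots Phi_rs); last exact: line_root_inj.
have -> : all (root line_numer) (map line_root L).
  by apply/allP => _ /mapP [b b_L ->]; apply: root_line_numer.
move=> /(_ isT isT); rewrite ltnNge.
by rewrite (size_pair_numer L (fun b g => size_polyC_leq1 (dot b g)) size_line_form).
Qed.

Lemma pair_numer_line (t : R) :
  pair_numer L (@dot R n) (fun k => dot k (x + t *: y)) = 0.
Proof. by rewrite -horner_line_numer line_numer_eq0 horner0. Qed.

End GenericLine.

Theorem mainTheorem17 (R : realType) (n : nat) (Phi : seq 'rV[R]_n)
  (f : 'rV[R]_n) :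
  (0 < n)%N -> root_system Phi -> irreducible_rs Phi -> regular Phi f ->
  forall x : 'rV[R]_n,
    (forall be, be \in positive_roots Phi f -> dot be x != 0) ->
    \sum_(be <- positive_roots Phi f)
      \sum_(ga <- positive_roots Phi f | ga != be)
        dot be ga / (dot be x * dot ga x) = 0.
Proof.
move=> _ Phi_rs _ f_reg x x_nonorth.
have [y [y_nonorth xy_indep]] := exists_generic_direction Phi_rs x_nonorth.
have prod_neq0 : \prod_(k <- positive_roots Phi f) dot k x != 0.
  by rewrite prodf_seq_neq0; apply/allP.
have := pair_numer_line Phi_rs f_reg y_nonorth xy_indep 0.
rewrite scale0r addr0 pair_numerE ?(uniq_positive_roots Phi_rs) // => /eqP.
by rewrite mulf_eq0 (negbTE prod_neq0) => /eqP.
Qed.
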